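(* Let $X$ be a set, let $T:\mathcal P(X)\to\mathcal P(X)$ be an order reversing quasi involution, and let $R:\mathcal P(X)\to\mathcal P(X)$ be a complemented order reversing quasi involution. Then the composition $T\circ R\circ T$ is an order reversing quasi involution, and the composition $R\circ T\circ R$ is a complemented order reversing quasi involution.
   Context: $\mathcal P(X)$ denotes the power set of $X$. A map $T:\mathcal P(X)\to\mathcal P(X)$ is an order reversing quasi involution if for all $K,L\subseteq X$: $K\subseteq TTK$, and $L\subseteq K$ implies $TK\subseteq TL$. A map $R:\mathcal P(X)\to\mathcal P(X)$ is a complemented order reversing quasi involution if for all $K,L\subseteq X$: $RRK\subseteq K$, and $L\subseteq K$ implies $RK\subseteq RL$. *)

Definition subset {X : Type} (K L : X -> Prop) : Prop := forall x, K x -> L x.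

Definition orqi {X : Type} (T : (X -> Prop) -> (X -> Prop)) : Prop :=
  (forall K, subset K (T (T K))) /\
  (forall K L, subset L K -> subset (T K) (T L)).

Definition corqi {X : Type} (R : (X -> Prop) -> (X -> Prop)) : Prop :=
  (forall K, subset (R (R K)) K) /\
  (forall K L, subset L K -> subset (R K) (R L)).


(* R T T R shrinks and T R R T enlarges every set; applying the outer map of
   T R T (resp. R T R) twice wraps one of these sandwiches in an antitone map,
   which turns it into the required quasi-involution inequality. *)

Definition antitone {X : Type} (F : (X -> Prop) -> (X -> Prop)) : Prop :=
  forall K L, subset L K -> subset (F K) (F L).

Lemma subset_trans {X : Type} (K L M : X -> Prop) :
  subset K L -> subset L M -> subset K M.
Proof. intros HKL HLM x Hx. apply HLM, HKL, Hx. Qed.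

Lemma antitone_comp3 {X : Type} (F G H : (X -> Prop) -> (X -> Prop)) :
  antitone F -> antitone G -> antitone H -> antitone (fun K => F (G (H K))).
Proof. intros HF HG HH K L HLK. apply HF, HG, HH, HLK. Qed.

Lemma corqi_sandwich {X : Type} (T R : (X -> Prop) -> (X -> Prop)) :
  (forall K, subset K (T (T K))) -> corqi R ->
  forall K, subset (R (T (T (R K)))) K.
Proof.
  intros T_ext [R_cont R_anti] K.
  apply subset_trans with (R (R K)); [apply R_anti, T_ext | apply R_cont].
Qed.

Lemma orqi_sandwich {X : Type} (T R : (X -> Prop) -> (X -> Prop)) :
  orqi T -> (forall K, subset (R (R K)) K) ->
  forall K, subset K (T (R (R (T K)))).
Proof.
  intros [T_ext T_anti] R_cont K.
  apply subset_trans with (T (T K)); [apply T_ext | apply T_anti, R_cont].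
Qed.

Theorem lemma8p12 (X : Type) (T R : (X -> Prop) -> (X -> Prop)) :
  orqi T -> corqi R ->
  orqi (fun K => T (R (T K))) /\ corqi (fun K => R (T (R K))).
Proof.
  intros HT HR.
  pose proof HT as [T_ext T_anti]. pose proof HR as [R_cont R_anti].
  split; split.
  - intros K. apply subset_trans with (T (T K)); [apply T_ext |].
    apply T_anti, (corqi_sandwich T R T_ext HR).
  - apply antitone_comp3; assumption.
  - intros K. apply subset_trans with (R (R K)); [| apply R_cont].
    apply R_anti, (orqi_sandwich T R HT R_cont).
  - apply antitone_comp3; assumption.
Qed.
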